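(* Let $\mathcal{M}$ be a CTMC with states $s_1,\dots,s_n$ ($n=|S|$), $s_1$ the initial state, $E(s)=1$ for all states, and $s_n=g$ a unique absorbing goal state; let $\delta>0$, $c=e^{\delta}$, $\mathcal{M}'=c\cdot\mathcal{M}$, $t\geq0$. Suppose the transition probability matrix is diagonalizable, $\mathbf{P}=\mathbf{S}\mathbf{D}\mathbf{S}^{-1}$, as below. Then $$\left|\mathrm{Pr}^{\mathcal{M}'}(\lozenge^{\leq t}g)-\mathrm{Pr}^{\mathcal{M}}(\lozenge^{\leq t}g)\right|\leq(n-a_{\mathbf{P}})\cdot C\cdot\sum_{k=1}^{\infty}|\lambda|^{k-1}\cdot\mathrm{Diff}_t(\mathcal{E}_k),$$ where $C=\max_{i=a_{\mathbf{P}}+1,\dots,n}\left|\mathbf{S}_{1,i}\cdot\mathbf{S}^{-1}_{i,n}\cdot(\lambda_i-1)\right|$.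
   Context: In a CTMC the process stays in $s$ an exponential time with rate $E(s)$, then jumps to $s'$ with probability $P(s,s')$; $c\cdot\mathcal{M}$ multiplies all exit rates by $c$; $\mathrm{Pr}^{\mathcal{M}}(\lozenge^{\leq t}g)$ is the probability of reaching $g$ from the initial state within time $t$. Standing assumption: states from which $g$ is unreachable are collapsed into a single absorbing fail state, so $\mathcal{M}$ has at most two absorbing states, one of which is reached almost surely. $\mathbf{P}_{i,j}=P(s_i,s_j)$; $a_{\mathbf{P}}\in\{1,2\}$ is the multiplicity of eigenvalue $1$ of $\mathbf{P}$. $\mathbf{D}$ is diagonal with diagonal entries $\lambda_1,\dots,\lambda_n$, the eigenvalues of $\mathbf{P}$ repeated according to multiplicity, in descending order of modulus, so $\lambda_1=\dots=\lambda_{a_{\mathbf{P}}}=1$; $\mathbf{S}$ is invertible. $\lambda$ denotes the eigenvalue of second largest modulus, $\lambda=\lambda_{a_{\mathbf{P}}+1}$. The Erlang CTMC $\mathcal{E}_k$ has states $s_0,\dots,s_{k-1},g$, initial state $s_0$, all exit rates $1$, a deterministic chain $s_0\to s_1\to\dots\to s_{k-1}\to g$ with $g$ absorbing and labeled differently from the equally labeled others; $\mathrm{Diff}_t(\mathcal{E}_k)=|\mathrm{Pr}^{\mathcal{E}_k}(\lozenge^{\leq t}g)-\mathrm{Pr}^{c\cdot\mathcal{E}_k}(\lozenge^{\leq t}g)|$. *)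

From HB Require Import structures.
From mathcomp Require Import all_boot all_order all_algebra.
From mathcomp Require Import all_classical all_reals all_analysis.
From mathcomp Require Import complex.
Set Implicit Arguments. Unset Strict Implicit. Unset Printing Implicit Defensive.
Import Order.TTheory GRing.Theory Num.Theory.
Local Open Scope ring_scope.

(* A (labelled-by-goal) CTMC with states 'I_n.+1 (i.e. n.+1 states),
   exit rates [rate] and embedded jump matrix [jump]. The initial state is
   ord0; the goal state is passed explicitly. *)
Record ctmc (R : realType) (n : nat) := Ctmc {
  rate : 'I_n.+1 -> R ;
  jump : 'M[R]_n.+1 }.

Definition scale_ctmc (R : realType) n (c : R) (M : ctmc R n) : ctmc R n :=
  Ctmc (fun s => c * rate M s) (jump M).

Definition unif_rate (R : realType) n (M : ctmc R n) : R :=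
  \big[Num.max/0]_(s < n.+1) rate M s.

Definition unif_mx (R : realType) n (M : ctmc R n) (g : 'I_n.+1) : 'M[R]_n.+1 :=
  \matrix_(i, j)
    if i == g then (j == g)%:R
    else rate M i / unif_rate M * jump M i j
         + (i == j)%:R * (1 - rate M i / unif_rate M).

Definition poisson (R : realType) (x : R) (k : nat) : R :=
  expR (- x) * x ^+ k / (k`!)%:R.

(* Pr^M(<>^{<= t} g) from the initial state ord0, by uniformisation:
   probability of being in g at time t when g is made absorbing. *)
Definition reach_prob (R : realType) n (M : ctmc R n) (g : 'I_n.+1) (t : R) : R :=
  limn (fun N => \sum_(k < N)
     poisson (unif_rate M * t) k * (unif_mx M g ^+ k) ord0 g).

(* Erlang CTMC E_k: states s_0..s_{k-1}, g (= index k), all rates 1,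
   s_i -> s_{i+1}, s_{k-1} -> g, g absorbing. *)
Definition erlang (R : realType) (k : nat) : ctmc R k :=
  Ctmc (fun _ => 1)
       (\matrix_(i, j) if (i : nat) == k then (j == ord_max)%:R
                       else ((j : nat) == i.+1)%:R).

Definition Diff (R : realType) (c t : R) (k : nat) : R :=
  `| reach_prob (erlang R k) ord_max t
     - reach_prob (scale_ctmc c (erlang R k)) ord_max t |.

Definition cmod (R : realType) (z : R[i]) : R :=
  Num.sqrt (complex.Re z ^+ 2 + complex.Im z ^+ 2).

Definition to_C (R : realType) (x : R) : R[i] := Complex x 0.

From HB Require Import structures.
From mathcomp Require Import all_boot all_order all_algebra.
From mathcomp Require Import all_classical all_reals all_analysis.
From mathcomp Require Import complex.
From mathcomp Require Import ring zify.
Import Order.TTheory GRing.Theory Num.Theory.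
Import numFieldNormedType.Exports.
Set Implicit Arguments. Unset Strict Implicit. Unset Printing Implicit Defensive.
Local Open Scope ring_scope.

(* With all exit rates equal to r and g absorbing, uniformisation makes the
   probability of reaching g by time t the Poisson(r t)-mixture of the hitting
   probabilities A_k = (P^k)_{1,n}, which are nondecreasing in k.  Summation by
   parts turns the mixture into A_0 + sum_j (A_{j+1} - A_j) Pr[Poisson(r t) > j],
   and Pr[Poisson(x) > j] is exactly the probability that the Erlang chain
   E_{j+1} is absorbed by time x.  Hence the two mixtures (r = 1 and r = c)
   differ by at most sum_j (A_{j+1} - A_j) Diff_t(E_{j+1}).  Finally
   P = S D S^-1 gives A_{j+1} - A_j = sum_i S_{1,i} S^-1_{i,n} (lambda_i - 1)
   lambda_i^j, whose terms with lambda_i = 1 vanish and whose other terms are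
   bounded by C |lambda|^j. *)

Section PoissonSeries.
Variable R : realType.
Implicit Types (x : R) (u : R ^nat).

Lemma EFin_lim_series u : cvgn (series u) ->
  (\sum_(k <oo) (u k)%:E)%E = (limn (series u))%:E.
Proof.
move=> cu; rewrite -EFin_lim //; apply: congr_lim; apply/funext => N.
by rewrite /series /= sumEFin.
Qed.

Lemma norm_lim_series_le u : cvgn (series u) ->
  ((`|limn (series u)|)%:E <= \sum_(k <oo) (`|u k|)%:E)%E.
Proof.
move=> cu; have [->|] := eqVneq (\sum_(k <oo) (`|u k|)%:E)%E +oo%E; first exact: leey.
rewrite -ltey => fin_norm.
have cnu : cvgn (series (fun k => `|u k|)).
  by apply: nnseries_is_cvg fin_norm => k; exact: normr_ge0.
by rewrite EFin_lim_series // lee_fin; apply: lim_series_norm.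
Qed.

Lemma poisson_ge0 x k : 0 <= x -> 0 <= poisson x k.
Proof. by move=> x0; rewrite /poisson divr_ge0 ?mulr_ge0 ?expR_ge0 ?exprn_ge0. Qed.

Lemma cvg_series_poisson x : (series (poisson x) @ \oo --> (1 : R))%classic.
Proof.
have -> : series (poisson x) = fun N => expR (- x) * series (exp_coeff x) N.
  apply/funext => N; rewrite /series /= mulr_sumr; apply: eq_bigr => k _.
  by rewrite /poisson /exp_coeff /= mulrA.
have cvg_exp : (series (exp_coeff x) @ \oo --> expR x)%classic :=
  is_cvg_series_exp_coeff x.
by rewrite -(expR0 R) -(addNr x) expRD; apply: cvgM => //; exact: cvg_cst.
Qed.

Lemma nneseries_poisson x : (\sum_(k <oo) (poisson x k)%:E)%E = 1%:E.
Proof.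
have px := cvg_series_poisson x.
by rewrite EFin_lim_series ?(cvg_lim _ px) //; apply: cvgP px.
Qed.

End PoissonSeries.

Section SummationByParts.
Variable R : realType.
Local Open Scope ereal_scope.

Lemma nneseries_ltn (f : (\bar R)^nat) k : (forall j, 0 <= f j) ->
  \sum_(j <oo | (j < k)%N) f j = \sum_(j < k) f j.
Proof.
move=> f0; rewrite (@nneseries_split_cond _ _ 0 k) // eseries0 ?adde0; last first.
  by move=> j; rewrite add0n leqNgt => /negbTE ->.
by rewrite add0n big_mkord; apply: eq_bigl => j; rewrite ltn_ord.
Qed.

Lemma nneseries_summation_by_parts (p A d : R^nat) :
  (forall k, (0 <= p k)%R) -> (forall j, (0 <= d j)%R) -> (0 <= A 0%N)%R ->
  (forall k, A k = A 0%N + \sum_(j < k) d j)%R ->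
  \sum_(k <oo) (p k * A k)%:E =
    (A 0%N)%:E * \sum_(k <oo) (p k)%:E +
    \sum_(j <oo) (d j)%:E * \sum_(k <oo | (j < k)%N) (p k)%:E.
Proof.
move=> p0 d0 A0 AE.
have pd0 k j : 0 <= (p k * d j)%:E by rewrite lee_fin mulr_ge0.
transitivity (\sum_(k <oo) ((A 0%N * p k)%:E +
    \sum_(j <oo) (if (j < k)%N then (p k * d j)%:E else 0))).
  apply: eq_eseriesr => k _; rewrite -eseries_mkcond nneseries_ltn // sumEFin.
  by rewrite -EFinD AE mulrDr mulr_sumr mulrC.
rewrite nneseriesD; first last.
- by move=> k _ _; apply: nneseries_ge0 => j _ _; case: ifP.
- by move=> k _ _; rewrite lee_fin mulr_ge0.
congr (_ + _).
  by under eq_eseriesr do rewrite EFinM; rewrite nneseriesZl // => k _; rewrite lee_fin.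
rewrite nneseries_interchange; last by move=> k j; case: ifP.
apply: eq_eseriesr => j _; rewrite -eseries_mkcond -nneseriesZl; last first.
  by move=> k _; rewrite lee_fin.
by apply: eq_eseriesr => k _; rewrite -EFinM mulrC.
Qed.

End SummationByParts.

Section PoissonMixture.
Variable R : realType.
Implicit Types (x : R) (v : R ^nat).

Lemma is_cvg_series_poissonM x v : 0 <= x -> (forall k, 0 <= v k <= 1) ->
  cvgn (series (fun k => poisson x k * v k)).
Proof.
move=> x0 v01; have pv0 k : 0 <= poisson x k * v k.
  by rewrite mulr_ge0 ?poisson_ge0 //; case/andP: (v01 k).
apply: nnseries_is_cvg => //; apply: le_lt_trans (ltry 1).
rewrite -(nneseries_poisson x); apply: lee_nneseries => [k _ _|k _].
  by rewrite lee_fin.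
by rewrite lee_fin ler_piMr ?poisson_ge0 //; case/andP: (v01 k).
Qed.

Definition poisson_tail x (j : nat) : R :=
  limn (series (fun k => poisson x k * (j < k)%:R)).

Lemma nneseries_poisson_tail x j : 0 <= x ->
  (\sum_(k <oo | (j < k)%N) (poisson x k)%:E)%E = (poisson_tail x j)%:E.
Proof.
move=> x0; rewrite eseries_mkcond -EFin_lim_series; last first.
  by apply: is_cvg_series_poissonM => // k; case: (j < k)%N; rewrite ?lexx ?ler01.
by apply: eq_eseriesr => k _; case: (j < k)%N; rewrite ?mulr1 ?mulr0.
Qed.

Lemma poisson_tail_ge0 x j : 0 <= x -> 0 <= poisson_tail x j.
Proof.
move=> x0; rewrite -lee_fin -nneseries_poisson_tail //.
by apply: nneseries_ge0 => k _ _; rewrite lee_fin poisson_ge0.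
Qed.

Lemma lim_series_poissonM x (A d : R ^nat) : 0 <= x ->
  (forall k, 0 <= A k <= 1) -> (forall j, 0 <= d j) ->
  (forall k, A k = A 0%N + \sum_(j < k) d j) ->
  cvgn (series (fun j => d j * poisson_tail x j)) /\
  limn (series (fun k => poisson x k * A k)) =
    A 0%N + limn (series (fun j => d j * poisson_tail x j)).
Proof.
move=> x0 A01 d0 AE; have A0 : 0 <= A 0%N by case/andP: (A01 0%N).
have cpA := is_cvg_series_poissonM x0 A01.
have := nneseries_summation_by_parts (fun k => poisson_ge0 k x0) d0 A0 AE.
rewrite nneseries_poisson mule1 EFin_lim_series //.
under [X in _ = _ + X]eq_eseriesr do rewrite nneseries_poisson_tail // -EFinM.
move=> mixtureE.
have dt0 j : 0 <= d j * poisson_tail x j by rewrite mulr_ge0 ?poisson_tail_ge0.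
have cdt : cvgn (series (fun j => d j * poisson_tail x j)).
  apply: nnseries_is_cvg => //.
  apply: le_lt_trans (ltry (limn (series (fun k => poisson x k * A k)))).
  by rewrite mixtureE leeDr // lee_fin.
by split=> //; move: mixtureE; rewrite EFin_lim_series // -EFinD => -[].
Qed.

Lemma dist_lim_series_poissonM x y (A d : R ^nat) : 0 <= x -> 0 <= y ->
  (forall k, 0 <= A k <= 1) -> (forall j, 0 <= d j) ->
  (forall k, A k = A 0%N + \sum_(j < k) d j) ->
  ((`|limn (series (fun k => poisson y k * A k)) -
      limn (series (fun k => poisson x k * A k))|)%:E <=
    \sum_(j <oo) (d j * `|poisson_tail y j - poisson_tail x j|)%:E)%E.
Proof.
move=> x0 y0 A01 d0 AE.
have [cy ->] := lim_series_poissonM y0 A01 d0 AE.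
have [cx ->] := lim_series_poissonM x0 A01 d0 AE.
rewrite opprD addrACA subrr add0r -lim_seriesB //.
apply: le_trans (norm_lim_series_le (is_cvg_seriesB cy cx)) _.
apply: lee_nneseries => [j _ _|j _]; first by rewrite lee_fin.
by rewrite lee_fin /= -mulrBr normrM ger0_norm.
Qed.

End PoissonMixture.

Section Uniformisation.
Variable R : realType.

Lemma unif_rate_const n (M : ctmc R n) r : 0 <= r ->
  (forall s, rate M s = r) -> unif_rate M = r.
Proof.
move=> r0 rE; apply/le_anti/andP; split.
  by apply/bigmax_leP; split=> // s _; rewrite rE.
by rewrite -(rE ord0); apply: le_bigmax.
Qed.

Lemma unif_mx_absorbing n (M : ctmc R n) r g : 0 < r ->
  (forall s, rate M s = r) -> (forall j, jump M g j = (j == g)%:R) ->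
  unif_mx M g = jump M.
Proof.
move=> r0 rE jg; apply/matrixP => i j.
rewrite mxE; case: ifP => [/eqP ->|_]; first by rewrite jg.
by rewrite (unif_rate_const (ltW r0) rE) rE divff ?lt0r_neq0 // subrr mulr0 addr0 mul1r.
Qed.

Lemma reach_prob_absorbing n (M : ctmc R n) r g x : 0 < r ->
  (forall s, rate M s = r) -> (forall j, jump M g j = (j == g)%:R) ->
  reach_prob M g x =
    limn (series (fun k => poisson (r * x) k * (jump M ^+ k) ord0 g)).
Proof.
move=> r0 rE jg; rewrite /reach_prob (unif_mx_absorbing r0 rE jg).
rewrite (unif_rate_const (ltW r0) rE).
by congr (limn _); apply/funext => N; rewrite /series /= big_mkord.
Qed.

Lemma erlang_jumpE k (i j : 'I_k.+1) :
  jump (erlang R k) i j = ((j : nat) == minn i.+1 k)%:R.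
Proof.
rewrite mxE; case: eqP => [ik|/eqP ik].
  by rewrite -val_eqE /= ik minnE subSnn subn1.
by have /minn_idPl -> : (i < k)%N by rewrite ltn_neqAle ik -ltnS ltn_ord.
Qed.

Lemma erlang_jump_pow k m (i : 'I_k.+1) :
  (jump (erlang R k) ^+ m) i ord_max = (k <= i + m)%:R.
Proof.
elim: m i => [|m IHm] i.
  by rewrite expr0 mxE addn0 -val_eqE /= eqn_leq -ltnS ltn_ord.
rewrite exprS -mulmxE mxE (eq_bigr (fun l : 'I_k.+1 =>
  if (l : nat) == minn i.+1 k then (k <= l + m)%:R else 0)); last first.
  by move=> l _; rewrite erlang_jumpE IHm; case: eqP; rewrite ?mul1r ?mul0r.
rewrite -big_mkcond (big_ord1_eq _ (fun l => (k <= l + m)%:R)) ltnS geq_minr.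
by congr (_%:R); have := ltn_ord i; lia.
Qed.

Lemma reach_prob_erlang k (M : ctmc R k.+1) r x : 0 < r ->
  (forall s, rate M s = r) -> jump M = jump (erlang R k.+1) ->
  reach_prob M ord_max x = poisson_tail (r * x) k.
Proof.
move=> r0 rE jE; have jg j : jump M ord_max j = (j == ord_max)%:R.
  by rewrite jE erlang_jumpE (minn_idPr (leqnSn _)) -val_eqE.
rewrite (reach_prob_absorbing _ r0 rE jg) jE.
by congr (limn (series _)); apply/funext => m; rewrite erlang_jump_pow.
Qed.

Lemma Diff_erlang (c t : R) k : 0 < c ->
  Diff c t k.+1 = `|poisson_tail (c * t) k - poisson_tail t k|.
Proof.
move=> c0; rewrite /Diff (@reach_prob_erlang _ (erlang R k.+1) 1) // mul1r distrC.
by rewrite (@reach_prob_erlang _ _ c) // => s; rewrite /= mulr1.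
Qed.

End Uniformisation.

Section StochasticMatrix.
Variables (R : numDomainType) (n : nat) (P : 'M[R]_n.+1).
Hypothesis P_ge0 : forall i j, 0 <= P i j.
Hypothesis P_row1 : forall i, \sum_j P i j = 1.

Lemma stochastic_pow_ge0 k i j : 0 <= (P ^+ k) i j.
Proof.
elim: k i j => [|k IHk] i j; first by rewrite expr0 mxE ler0n.
by rewrite exprSr -mulmxE mxE sumr_ge0 // => l _; rewrite mulr_ge0.
Qed.

Lemma stochastic_pow_row1 k i : \sum_j (P ^+ k) i j = 1.
Proof.
elim: k i => [|k IHk] i.
  rewrite expr0 (bigD1 i) //= mxE eqxx big1 ?addr0 // => j.
  by rewrite mxE eq_sym => /negbTE ->.
under eq_bigr do rewrite exprSr -mulmxE mxE.
rewrite exchange_big /= -(IHk i); apply: eq_bigr => l _.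
by rewrite -mulr_sumr P_row1 mulr1.
Qed.

Lemma stochastic_pow_le1 k i j : (P ^+ k) i j <= 1.
Proof.
rewrite -(stochastic_pow_row1 k i) (bigD1 j) //= lerDl.
by rewrite sumr_ge0 // => l _; apply: stochastic_pow_ge0.
Qed.

Lemma absorbing_row g : P g g = 1 -> forall j, P g j = (j == g)%:R.
Proof.
move=> Pgg j; case: eqP => [->//|/eqP jg].
have := P_row1 g; rewrite (bigD1 g) //= Pgg -[X in _ = X]addr0 => /addrI sum0.
by apply: (psumr_eq0P _ sum0) => // l _; apply: P_ge0.
Qed.

Lemma absorbing_pow_ge g k i : P g g = 1 -> (P ^+ k) i g <= (P ^+ k.+1) i g.
Proof.
move=> Pgg; rewrite exprSr -mulmxE mxE (bigD1 g) //= Pgg mulr1 lerDl.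
by rewrite sumr_ge0 // => l _; rewrite mulr_ge0 ?stochastic_pow_ge0.
Qed.

End StochasticMatrix.

Lemma diag_mx_row_pow (F : comPzRingType) m (d : 'I_m.+1 -> F) k :
  diag_mx (\row_i d i) ^+ k = diag_mx (\row_i d i ^+ k).
Proof.
elim: k => [|k IHk].
  rewrite expr0 -idmxE -diag_const_mx; congr diag_mx.
  by apply/matrixP => i j; rewrite !mxE expr0.
rewrite exprSr IHk -mulmxE mulmx_diag; congr diag_mx.
by apply/matrixP => i j; rewrite !mxE exprSr.
Qed.

Lemma similar_mx_pow (F : comUnitRingType) m (A B S : 'M[F]_m.+1) k :
  S \in unitmx -> A = S *m B *m invmx S -> A ^+ k = S *m B ^+ k *m invmx S.
Proof.
move=> S_unit ->; elim: k => [|k IHk]; first by rewrite !expr0 mulmx1 mulmxV.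
rewrite exprSr IHk -!mulmxE !mulmxA mulmxKV //.
by rewrite -[S *m _ *m B]mulmxA mulmxE -exprSr.
Qed.

Lemma sumr_ord_geq_const (V : nmodType) m a (x : V) :
  \sum_(i < m | (a <= i)%N) x = x *+ (m - a).
Proof.
by rewrite -(big_mkord (fun i => a <= i)%N) -sumr_const_nat (big_nat_widenl a 0).
Qed.

Section Spectral.
Variable R : realType.
Local Open Scope complex_scope.

Lemma cmodE (z : R[i]) : (cmod z)%:C = `|z|.
Proof. by rewrite normc_def; case: z. Qed.

Lemma cmod_ge0 (z : R[i]) : 0 <= cmod z.
Proof. exact: sqrtr_ge0. Qed.

Lemma cmodM (z w : R[i]) : cmod (z * w) = cmod z * cmod w.
Proof. by apply: (@complexI R); rewrite rmorphM /= !cmodE normrM. Qed.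

Lemma cmodX (z : R[i]) k : cmod (z ^+ k) = cmod z ^+ k.
Proof. by apply: (@complexI R); rewrite rmorphXn /= !cmodE normrX. Qed.

Lemma cmod_real (x : R) : cmod x%:C = `|x|.
Proof. by rewrite /cmod /= expr0n /= addr0 sqrtr_sqr. Qed.

Lemma ler_cmod_sum (I : finType) (Q : pred I) (F : I -> R[i]) :
  cmod (\sum_(i | Q i) F i) <= \sum_(i | Q i) cmod (F i).
Proof.
rewrite -lecR cmodE rmorph_sum [X in _ <= X](eq_bigr (fun i => `|F i|)) ?ler_norm_sum //.
by move=> i _; apply: cmodE.
Qed.

Lemma diagonalization_pow_entry n (P : 'M[R]_n.+1) (S : 'M[R[i]]_n.+1)
    (lam : 'I_n.+1 -> R[i]) k i j :
  S \in unitmx -> map_mx (@to_C R) P = S *m diag_mx (\row_l lam l) *m invmx S ->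
  ((P ^+ k) i j)%:C = \sum_l S i l * lam l ^+ k * invmx S l j.
Proof.
move=> S_unit PE; have -> : ((P ^+ k) i j)%:C = (map_mx (@to_C R) P ^+ k) i j.
  by change (map_mx (@to_C R) P) with (map_mx (real_complex R) P); rewrite -rmorphXn mxE.
rewrite (similar_mx_pow k S_unit PE) diag_mx_row_pow mxE.
by apply: eq_bigr => l _; rewrite mul_mx_diag !mxE.
Qed.

Lemma diagonalization_pow_increment_le n (P : 'M[R]_n.+1) (S : 'M[R[i]]_n.+1)
    (lam : 'I_n.+1 -> R[i]) (a : nat) (L : R) k p q :
  S \in unitmx -> map_mx (@to_C R) P = S *m diag_mx (\row_l lam l) *m invmx S ->
  (forall i : 'I_n.+1, (i < a)%N -> lam i = 1) ->
  (forall i : 'I_n.+1, (a <= i)%N -> cmod (lam i) <= L) ->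
  `|(P ^+ k.+1) p q - (P ^+ k) p q| <=
    (n.+1 - a)%:R * \big[Num.max/0]_(i : 'I_n.+1 | (a <= i)%N)
      cmod (S p i * invmx S i q * (lam i - 1)) * L ^+ k.
Proof.
move=> S_unit PE lam1 lamL.
set w := fun i => S p i * invmx S i q * (lam i - 1).
set C := \big[Num.max/0]_(i | _) _.
have incrE : ((P ^+ k.+1) p q - (P ^+ k) p q)%:C = \sum_i w i * lam i ^+ k.
  rewrite rmorphB /= !(diagonalization_pow_entry _ _ _ S_unit PE) -sumrB.
  by apply: eq_bigr => i _; rewrite /w exprS; ring.
rewrite -cmod_real incrE (bigID (fun i : 'I_n.+1 => (a <= i)%N)) /=.
rewrite [X in _ + X]big1 ?addr0 => [|i]; last first.
  by rewrite -ltnNge => /lam1 li1; rewrite /w li1 subrr mulr0 mul0r.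
apply: le_trans (ler_cmod_sum _ _) _.
rewrite mulr_natl mulrnAl -sumr_ord_geq_const; apply: ler_sum => i ai.
rewrite cmodM cmodX; apply: ler_pM; rewrite ?exprn_ge0 ?cmod_ge0 //.
  exact: (le_bigmax_cond 0 (fun i => cmod (w i)) ai).
by apply: lerXn2r; rewrite ?nnegrE ?cmod_ge0 ?lamL // (le_trans (cmod_ge0 _) (lamL i ai)).
Qed.

End Spectral.

Theorem proposition7 (R : realType) (n : nat) (P : 'M[R]_n.+1)
  (S : 'M[R[i]]_n.+1) (lam : 'I_n.+1 -> R[i]) (a : nat) (delta t : R) :
  (* P is the (stochastic) transition probability matrix of M *)
  (forall i j, 0 <= P i j) ->
  (forall i, \sum_(j < n.+1) P i j = 1) ->
  (* s_n = g (= ord_max) is absorbing *)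
  P ord_max ord_max = 1 ->
  (* standing assumption: all states from which g is unreachable have been
     collapsed into a single absorbing fail state *)
  (forall s s' : 'I_n.+1,
      ~~ connect [rel x y | 0 < P x y] s ord_max ->
      ~~ connect [rel x y | 0 < P x y] s' ord_max -> s = s') ->
  (forall s : 'I_n.+1,
      ~~ connect [rel x y | 0 < P x y] s ord_max -> P s s = 1) ->
  0 < delta -> 0 <= t ->
  (* diagonalisation P = S D S^-1, D = diag(lam_1, ..., lam_n) *)
  S \in unitmx ->
  map_mx (@to_C R) P = S *m diag_mx (\row_i lam i) *m invmx S ->
  (* eigenvalues in descending order of modulus *)
  (forall i j : 'I_n.+1, (i <= j)%N -> cmod (lam j) <= cmod (lam i)) ->
  (* a = a_P, the multiplicity of eigenvalue 1, and lam_1 = ... = lam_a = 1 *)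
  a = #|[pred i : 'I_n.+1 | lam i == 1]| ->
  (forall i : 'I_n.+1, (i < a)%N -> lam i = 1) ->
  let M := Ctmc (fun _ : 'I_n.+1 => 1) P in
  let c := expR delta in
  let M' := scale_ctmc c M in
  let lambda := lam (inord a) in
  let C := \big[Num.max/0]_(i : 'I_n.+1 | (a <= i)%N)
             cmod (S ord0 i * invmx S i ord_max * (lam i - 1)) in
  ((`| reach_prob M' ord_max t - reach_prob M ord_max t |)%:E
    <= ((n.+1 - a)%:R * C)%:E *
       \sum_(1 <= k <oo) ((cmod lambda) ^+ k.-1 * Diff c t k)%:E)%E.
Proof.
move=> P_ge0 P_row1 Pgg _ _ delta_gt0 t_ge0 S_unit PE lam_ord _ lam1.
cbv zeta; set M := Ctmc _ P; set c := expR delta; set L := cmod (lam (inord a)).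
pose A k := (P ^+ k) ord0 ord_max.
pose d j := A j.+1 - A j.
have c_gt0 : 0 < c := expR_gt0 delta.
have d_ge0 j : 0 <= d j by rewrite subr_ge0 absorbing_pow_ge.
have gP j : jump M ord_max j = (j == ord_max)%:R := absorbing_row P_ge0 P_row1 Pgg j.
have -> : reach_prob M ord_max t = limn (series (fun k => poisson t k * A k)).
  by rewrite (reach_prob_absorbing t ltr01 _ gP) ?mul1r.
have -> : reach_prob (scale_ctmc c M) ord_max t =
    limn (series (fun k => poisson (c * t) k * A k)).
  rewrite (reach_prob_absorbing (M := scale_ctmc c M) t c_gt0 _ gP) // => s.
  by rewrite /= mulr1.
apply: le_trans (dist_lim_series_poissonM t_ge0 (mulr_ge0 (ltW c_gt0) t_ge0) _ d_ge0 _) _.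
- by move=> k; rewrite stochastic_pow_ge0 ?stochastic_pow_le1.
- by move=> k; rewrite -(big_mkord xpredT d) telescope_sumr // addrC subrK.
have term_ge0 k : (0 <= (L ^+ k.-1 * Diff c t k)%:E)%E.
  by rewrite lee_fin mulr_ge0 ?exprn_ge0 ?cmod_ge0 ?normr_ge0.
rewrite -(nneseries_addn 1) // -nneseriesZl => [|k _]; last exact: term_ge0.
apply: lee_nneseries => [j _ _|j _]; first by rewrite lee_fin mulr_ge0.
rewrite addn1 /= -Diff_erlang // -EFinM lee_fin mulrA ler_wpM2r ?normr_ge0 //.
rewrite -[d j]ger0_norm //; apply: diagonalization_pow_increment_le => // i ai.
have a_lt : (a < n.+1)%N := leq_ltn_trans ai (ltn_ord i).
by apply: lam_ord; rewrite inordK.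
Qed.
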